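(* Let $H$ be a graph that is not a trivial pattern. Then the triangle $K_3$ is a projection of $H$.
   Context: A graph $H$ is a trivial pattern if, after removing its isolated vertices, it is either a complete bipartite graph or has at most two edges. A graph $H'$ is a projection of $H$ if $H'$ can be obtained from $H$ by a sequence of vertex deletions and identifications of two nonadjacent vertices. *)

(* Finite simple graphs inside an ambient finite type T:
   a graph is a vertex set V : {set T} and an edge set E : {set {set T}},
   each edge a 2-element subset of V. *)
From mathcomp Require Import all_boot.
Set Implicit Arguments. Unset Strict Implicit. Unset Printing Implicit Defensive.

Record sgraph (T : finType) := SGraph { verts : {set T}; edges : {set {set T}} }.

Definition wf_graph (T : finType) (G : sgraph T) : Prop :=
  forall e, e \in edges G -> #|e| = 2 /\ e \subset verts G.

Definition adjacent (T : finType) (G : sgraph T) (x y : T) : bool :=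
  [set x; y] \in edges G.

Definition del_vertex (T : finType) (G : sgraph T) (v : T) : sgraph T :=
  SGraph (verts G :\ v) [set e in edges G | v \notin e].

Definition identify (T : finType) (G : sgraph T) (u v : T) : sgraph T :=
  SGraph (verts G :\ v)
    ([set e in edges G | v \notin e] :|:
     [set [set u; w] | w in verts G & adjacent G v w]).

Inductive proj_step (T : finType) (G : sgraph T) : sgraph T -> Prop :=
| PS_del v : v \in verts G -> proj_step G (del_vertex G v)
| PS_ident u v : u \in verts G -> v \in verts G -> u != v ->
    ~~ adjacent G u v -> proj_step G (identify G u v).

Inductive projection (T : finType) (G : sgraph T) : sgraph T -> Prop :=
| Proj_refl : projection G G
| Proj_step G1 G2 : projection G G1 -> proj_step G1 G2 -> projection G G2.

Definition is_triangle (T : finType) (G : sgraph T) : Prop :=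
  exists a b c : T, [/\ a != b, b != c, a != c,
    verts G = [set a; b; c] &
    edges G = [set [set a; b]; [set b; c]; [set a; c]]].

Definition nonisolated (T : finType) (G : sgraph T) : {set T} :=
  [set x in verts G | [exists e in edges G, x \in e]].

Definition complete_bipartite_mod_isolated (T : finType) (G : sgraph T) : Prop :=
  exists A B : {set T}, [/\ [disjoint A & B], A :|: B = nonisolated G &
    edges G = [set [set a; b] | a in A, b in B]].

Definition trivial_pattern (T : finType) (G : sgraph T) : Prop :=
  complete_bipartite_mod_isolated G \/ #|edges G| <= 2.

From mathcomp Require Import all_boot.
From Stdlib Require Import Classical.
Set Implicit Arguments. Unset Strict Implicit. Unset Printing Implicit Defensive.

(* Suppose no projection of H is a triangle.  Then H is triangle-free, since a
   triangle survives the deletion of all other vertices, and every path a-b-c-d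
   whose ends are distinct and nonadjacent is excluded too, since identifying a
   with d turns a-b-c into a triangle.  Two edges with no edge between them,
   together with any third edge, can be merged into such a path by one or two
   further identifications.  Hence, as soon as H has three edges, every edge xy
   dominates every non-isolated vertex, and for a fixed edge x0y0 the
   neighbourhoods of y0 and of x0 are the two sides of a complete bipartite
   graph spanning the non-isolated vertices. *)

Section TriangleProjections.
Variable T : finType.
Implicit Types (G : sgraph T) (e : {set T}) (a b c d p q r s u v w x y z : T).

Definition has_K3_projection G := exists G', projection G G' /\ is_triangle G'.

Definition triangle_free G :=
  forall a b c, adjacent G a b -> adjacent G b c -> ~~ adjacent G a c.

Definition edges_dominate G := forall x y z, adjacent G x y -> z \in nonisolated G ->
  [|| z == x, z == y, adjacent G z x | adjacent G z y].

Definition induced_2K2 G x y z w := [&& adjacent G x y, adjacent G z w &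
  ~~ [|| adjacent G x z, adjacent G x w, adjacent G y z | adjacent G y w]].

Lemma adjC G x y : adjacent G x y = adjacent G y x.
Proof. by rewrite /adjacent setUC. Qed.

Lemma wf_adjacent G x y : wf_graph G -> adjacent G x y ->
  [/\ x != y, x \in verts G & y \in verts G].
Proof.
move=> wfG /wfG[card2 /subsetP sub]; split.
- by move: card2; rewrite cards2; case: (x != y).
- by apply: sub; rewrite !inE eqxx.
- by apply: sub; rewrite !inE eqxx orbT.
Qed.

Lemma wf_edge_pair G e : wf_graph G -> e \in edges G ->
  exists x y, e = [set x; y] /\ adjacent G x y.
Proof.
move=> wfG eE; have [card2 _] := wfG e eE.
have /cards2P[x [y [_ exy]]] : #|e| == 2 by rewrite card2.
by exists x, y; rewrite /adjacent -exy.
Qed.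

Lemma nonisolated_adjacent G x y : wf_graph G -> adjacent G x y -> x \in nonisolated G.
Proof.
move=> wfG xy; have [_ xV _] := wf_adjacent wfG xy.
by rewrite inE xV; apply/exists_inP; exists [set x; y]; rewrite // !inE eqxx.
Qed.

Lemma nonisolated_neighbour G z : wf_graph G -> z \in nonisolated G ->
  exists w, adjacent G z w.
Proof.
move=> wfG; rewrite inE => /andP[_ /exists_inP[e eE ze]].
have [p [q [epq pq]]] := wf_edge_pair wfG eE.
move: ze; rewrite epq !inE => /orP[] /eqP->; first by exists q.
by exists p; rewrite adjC.
Qed.

Lemma adjacent_del_vertex G v x y :
  adjacent (del_vertex G v) x y = [&& adjacent G x y, x != v & y != v].
Proof. by rewrite /adjacent /= !inE negb_or ![v == _]eq_sym. Qed.

Lemma adjacent_identify G u v x y : x != u -> y != u ->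
  adjacent (identify G u v) x y = [&& adjacent G x y, x != v & y != v].
Proof.
move=> xu yu; rewrite /adjacent /= !inE negb_or ![v == _]eq_sym.
case: imsetP => [[w _ exy] | _]; last by rewrite orbF.
have : u \in [set x; y] by rewrite exy !inE eqxx.
by rewrite !inE ![u == _]eq_sym (negbTE xu) (negbTE yu).
Qed.

Lemma adjacent_identify_merged G u v y : wf_graph G -> u != v ->
  adjacent (identify G u v) u y = (adjacent G u y && (y != v)) || adjacent G v y.
Proof.
move=> wfG uv; rewrite /adjacent /= !inE negb_or eq_sym uv [v == y]eq_sym /=.
congr (_ || _); apply/imsetP/idP => [[w] | vy].
- rewrite inE => /andP[_ vw] euy.
  have : y \in [set u; w] by rewrite -euy !inE eqxx orbT.
  rewrite !inE => /orP[/eqP yu | /eqP-> //].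
  have : w \in [set u; y] by rewrite euy !inE eqxx orbT.
  by rewrite yu !inE orbb => /eqP <-.
- by exists y; rewrite // inE; case: (wf_adjacent wfG vy) => _ _ ->.
Qed.

Lemma wf_del_vertex G v : wf_graph G -> wf_graph (del_vertex G v).
Proof.
move=> wfG e; rewrite inE => /andP[eE ve]; have [card2 /subsetP sub] := wfG e eE.
split=> //; apply/subsetP => x xe; rewrite !inE sub // andbT.
by apply: contraNneq ve => <-.
Qed.

Lemma wf_identify G u v : wf_graph G -> u \in verts G -> u != v ->
  ~~ adjacent G u v -> wf_graph (identify G u v).
Proof.
move=> wfG uV uv nuv e; rewrite !inE => /orP[/andP[eE ve] | /imsetP[w]].
  by apply: (wf_del_vertex (v := v) wfG); rewrite inE eE.
rewrite inE => /andP[wV vw] ->; have [vw' _ _] := wf_adjacent wfG vw.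
have uw : u != w by apply: contraNneq nuv => ->; rewrite adjC.
split; first by rewrite cards2 uw.
by apply/subsetP => x; rewrite !inE => /orP[] /eqP->; rewrite ?uV ?wV andbT // eq_sym.
Qed.

Lemma projection_cons G G1 G2 : proj_step G G1 -> projection G1 G2 -> projection G G2.
Proof.
move=> st; elim=> [|G3 G4 _ IH st']; last exact: Proj_step IH st'.
exact: Proj_step (Proj_refl G) st.
Qed.

Lemma has_K3_projection_step G G1 :
  proj_step G G1 -> has_K3_projection G1 -> has_K3_projection G.
Proof. by move=> st [G' [pG' tG']]; exists G'; split=> //; apply: projection_cons st pG'. Qed.

Lemma is_triangle_of_verts G a b c : wf_graph G -> verts G = [set a; b; c] ->
  adjacent G a b -> adjacent G b c -> adjacent G a c -> is_triangle G.
Proof.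
move=> wfG Vabc ab bc ac.
have [ab' _ _] := wf_adjacent wfG ab; have [bc' _ _] := wf_adjacent wfG bc.
have [ac' _ _] := wf_adjacent wfG ac.
exists a, b, c; split=> //; apply/setP => e; apply/idP/idP.
- move=> eE; have [p [q [-> pq]]] := wf_edge_pair wfG eE.
  have [pq' pV qV] := wf_adjacent wfG pq; move: pV qV pq'; rewrite Vabc !inE.
  move=> /orP[/orP[] | ] /eqP-> /orP[/orP[] | ] /eqP->;
  by rewrite ?(setUC [set b] [set a]) ?(setUC [set c]) ?eqxx ?orbT.
- by rewrite !inE => /orP[/orP[] | ] /eqP->.
Qed.

Lemma triangle_K3 G a b c : wf_graph G ->
  adjacent G a b -> adjacent G b c -> adjacent G a c -> has_K3_projection G.
Proof.
have [n] := ubnP #|verts G :\: [set a; b; c]|; elim: n G => // n IH G.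
rewrite ltnS => card_out wfG ab bc ac.
have [_ aV bV] := wf_adjacent wfG ab; have [_ _ cV] := wf_adjacent wfG bc.
have [out0 | [v vout]] := set_0Vmem (verts G :\: [set a; b; c]).
  exists G; split; first exact: Proj_refl.
  apply: (is_triangle_of_verts wfG _ ab bc ac); apply/eqP.
  rewrite eqEsubset -setD_eq0 out0 eqxx /=.
  by apply/subsetP => x; rewrite !inE => /orP[/orP[] | ] /eqP->.
move: (vout); rewrite !inE !negb_or ![v == _]eq_sym => /andP[/andP[/andP[av bv] cv] vV].
apply: (has_K3_projection_step (PS_del vV)).
apply: (IH _ _ (wf_del_vertex (v := v) wfG));
  rewrite ?adjacent_del_vertex ?ab ?bc ?ac ?av ?bv ?cv //.
by rewrite /= setDDl setUC -setDDl (leq_trans _ card_out) // proper_card // properD1.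
Qed.

Lemma path3_K3 G a b c d : wf_graph G ->
  adjacent G a b -> adjacent G b c -> adjacent G c d -> a != d -> ~~ adjacent G a d ->
  has_K3_projection G.
Proof.
move=> wfG ab bc cd ad nad.
have [ab' aV _] := wf_adjacent wfG ab; have [cd' _ dV] := wf_adjacent wfG cd.
have ba : b != a by rewrite eq_sym.
have bd : b != d by apply: contraNneq nad => <-.
have ca : c != a by apply: contraNneq nad => <-.
apply: (has_K3_projection_step (PS_ident aV dV ad nad)).
apply: (triangle_K3 (a := a) (b := b) (c := c) (wf_identify wfG aV ad nad)).
- by rewrite adjacent_identify_merged // ab bd.
- by rewrite adjacent_identify // bc bd cd'.
- by rewrite adjacent_identify_merged // [adjacent G d c]adjC cd orbT.
Qed.

Lemma induced_2K2_neq G x y z w :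
  induced_2K2 G x y z w -> [/\ x != z, x != w, y != z & y != w].
Proof.
case/and3P=> _ zw; rewrite !negb_or => /and4P[nxz nxw nyz nyw]; split.
- by apply: contraNneq nxw => ->.
- by apply: contraNneq nxz => ->; rewrite adjC.
- by apply: contraNneq nyw => ->.
- by apply: contraNneq nyz => ->; rewrite adjC.
Qed.

Lemma induced_2K2_swap G x y z w : induced_2K2 G x y z w -> induced_2K2 G y x z w.
Proof.
case/and3P=> xy zw cross; apply/and3P; split; [by rewrite adjC | by [] |].
by apply: contra cross; case/or4P=> ->; rewrite ?orbT.
Qed.

Lemma induced_2K2_sym G x y z w : induced_2K2 G x y z w -> induced_2K2 G z w x y.
Proof.
case/and3P=> xy zw cross; apply/and3P; split => //; apply: contra cross.
by rewrite ![adjacent G _ x]adjC ![adjacent G _ y]adjC; case/or4P=> ->; rewrite ?orbT.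
Qed.

Lemma induced_2K2_pendant_K3 G x y z w r : wf_graph G -> induced_2K2 G x y z w ->
  adjacent G x r -> r != y -> r != z -> r != w -> has_K3_projection G.
Proof.
move=> wfG i2 xr ry rz rw; have [xz _ yz yw] := induced_2K2_neq i2.
case/and3P: i2 => xy zw; rewrite !negb_or => /and4P[_ _ nyz nyw].
have [xr' _ rV] := wf_adjacent wfG xr; have [_ zV _] := wf_adjacent wfG zw.
have yx : adjacent G y x by rewrite adjC.
have [rzA | nrz] := boolP (adjacent G r z); first exact: path3_K3 wfG yx xr rzA yz nyz.
(* Identifying r with z yields the path y-x-r-w. *)
have yr : y != r by rewrite eq_sym.
have wr : w != r by rewrite eq_sym.
apply: (has_K3_projection_step (PS_ident rV zV rz nrz)).
apply: (path3_K3 (a := y) (b := x) (c := r) (d := w) (wf_identify wfG rV rz nrz)) => //.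
- by rewrite adjacent_identify // yx yz xz.
- by rewrite adjC adjacent_identify_merged // adjC xr xz.
- by rewrite adjacent_identify_merged // zw orbT.
- by rewrite adjacent_identify // (negbTE nyw).
Qed.

Lemma induced_2K2_pendant_any_K3 G x y z w s r : wf_graph G -> induced_2K2 G x y z w ->
  s \in [set x; y; z; w] -> r \notin [set x; y; z; w] -> adjacent G s r ->
  has_K3_projection G.
Proof.
move=> wfG i2; rewrite !inE !negb_or => sS /andP[/andP[/andP[rx ry] rz] rw].
move: sS => /orP[/orP[/orP[] | ] | ] /eqP-> sr.
- exact: induced_2K2_pendant_K3 wfG i2 sr ry rz rw.
- exact: induced_2K2_pendant_K3 wfG (induced_2K2_swap i2) sr rx rz rw.
- exact: induced_2K2_pendant_K3 wfG (induced_2K2_sym i2) sr rw rx ry.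
- exact: induced_2K2_pendant_K3 wfG (induced_2K2_swap (induced_2K2_sym i2)) sr rz rx ry.
Qed.

Lemma induced_3K2_K3 G x y z w p q : wf_graph G -> induced_2K2 G x y z w ->
  induced_2K2 G x y p q -> induced_2K2 G z w p q -> has_K3_projection G.
Proof.
move=> wfG ixz ixp izp; have [xz xw _ _] := induced_2K2_neq ixz.
have [xp _ yp yq] := induced_2K2_neq ixp; have [zp zq wp wq] := induced_2K2_neq izp.
case/and3P: ixz => xy zw; rewrite !negb_or => /and4P[nxz nxw nyz nyw].
case/and3P: ixp => _ pq; rewrite !negb_or => /and4P[nxp _ _ _].
case/and3P: izp => _ _; rewrite !negb_or => /and4P[nzp _ nwp _].
have [xy' xV _] := wf_adjacent wfG xy; have [_ pV _] := wf_adjacent wfG pq.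
have [zx wx yx] : [/\ z != x, w != x & y != x] by split; rewrite eq_sym.
(* Identifying x with p keeps xy, zw induced and makes q a pendant vertex at x. *)
apply: (has_K3_projection_step (PS_ident xV pV xp nxp)).
apply: (induced_2K2_pendant_K3 (x := x) (y := y) (z := z) (w := w) (r := q)
  (wf_identify wfG xV xp nxp)); rewrite 1?eq_sym //.
- rewrite /induced_2K2 !adjacent_identify_merged ?adjacent_identify //.
  rewrite xy yp zw zp wp ![adjacent G p _]adjC (negbTE nzp) (negbTE nwp).
  by rewrite (negbTE nxz) (negbTE nxw) (negbTE nyz) (negbTE nyw).
- by rewrite adjacent_identify_merged // pq orbT.
Qed.

Lemma induced_2K2_inner_edge G x y z w p q : wf_graph G -> induced_2K2 G x y z w ->
  p \in [set x; y; z; w] -> q \in [set x; y; z; w] -> adjacent G p q ->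
  [set p; q] = [set x; y] \/ [set p; q] = [set z; w].
Proof.
move=> wfG /and3P[_ _ cross]; rewrite !inE => pS qS pq; have [pq' _ _] := wf_adjacent wfG pq.
move: pS qS pq pq' cross => /orP[/orP[/orP[] | ] | ] /eqP-> /orP[/orP[/orP[] | ] | ] /eqP->;
  rewrite ?eqxx //; try by [left | right | left; apply: setUC | right; apply: setUC].
all: by rewrite ?[adjacent G _ x]adjC ?[adjacent G _ y]adjC => -> _; rewrite ?orbT.
Qed.

Lemma induced_2K2_third_edge_K3 G x y z w e : wf_graph G -> induced_2K2 G x y z w ->
  e \in edges G -> e != [set x; y] -> e != [set z; w] -> has_K3_projection G.
Proof.
move=> wfG i2 eE exy ezw; set S := [set x; y; z; w].
have [p [q [epq pq]]] := wf_edge_pair wfG eE.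
have [/exists_inP[s sS /exists_inP[r]] | ] :=
  boolP [exists s in S, exists r in ~: S, adjacent G s r].
  by rewrite inE => rS sr; apply: induced_2K2_pendant_any_K3 wfG i2 sS rS sr.
rewrite negb_exists_in => /forall_inP S_closed.
have away s r : s \in S -> r \notin S -> adjacent G s r = false.
  move=> sS rS; apply/negP => sr; apply: (negP (S_closed s sS)).
  by apply/exists_inP; exists r; rewrite ?in_setC.
have [pS | pS] := boolP (p \in S).
  have qS : q \in S by apply: contraTT pq => qS; rewrite away.
  case: (induced_2K2_inner_edge wfG i2 pS qS pq); rewrite -epq => /eqP.
    by rewrite (negbTE exy).
  by rewrite (negbTE ezw).
have qS : q \notin S by apply: contra pS => qS; apply: contraTT pq => pS; rewrite adjC away.
have [xS yS zS wS] : [/\ x \in S, y \in S, z \in S & w \in S] by rewrite !inE !eqxx ?orbT.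
case/and3P: (i2) => xy zw _.
by apply: (induced_3K2_K3 (p := p) (q := q) wfG i2); rewrite /induced_2K2 ?xy ?zw pq !away.
Qed.

Lemma undominated_vertex_K3 G x y z : wf_graph G -> 2 < #|edges G| ->
  adjacent G x y -> z \in nonisolated G -> z != x -> z != y ->
  ~~ adjacent G z x -> ~~ adjacent G z y -> has_K3_projection G.
Proof.
move=> wfG edges3 xy zN zx zy nzx nzy; have [w zw] := nonisolated_neighbour wfG zN.
have [wz yx] : adjacent G w z /\ adjacent G y x by rewrite adjC [adjacent G y x]adjC.
have [nxz nyz] : ~~ adjacent G x z /\ ~~ adjacent G y z by rewrite !(adjC _ _ z).
have [xz yz] : x != z /\ y != z by rewrite ![_ == z]eq_sym.
have [xw | nxw] := boolP (adjacent G x w); first exact: path3_K3 wfG yx xw wz yz nyz.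
have [yw | nyw] := boolP (adjacent G y w); first exact: path3_K3 wfG xy yw wz xz nxz.
have i2 : induced_2K2 G x y z w.
  by rewrite /induced_2K2 xy zw (negbTE nxz) (negbTE nxw) (negbTE nyz) (negbTE nyw).
have /subsetPn[e eE] : ~~ (edges G \subset [set [set x; y]; [set z; w]]).
  apply: contraTN edges3 => /subset_leq_card le2; rewrite -leqNgt (leq_trans le2) //.
  by rewrite cards2; case: (_ != _).
rewrite !inE negb_or => /andP[exy ezw].
exact: induced_2K2_third_edge_K3 wfG i2 eE exy ezw.
Qed.

Section DominatingEdges.
Variables (G : sgraph T) (x0 y0 : T).
Hypotheses (wfG : wf_graph G) (x0y0 : adjacent G x0 y0).
Hypotheses (tfG : triangle_free G) (domG : edges_dominate G).

Lemma neighbourhoods_cover z : z \in nonisolated G -> adjacent G y0 z || adjacent G x0 z.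
Proof.
move=> zN; case/or4P: (domG x0y0 zN) => [/eqP-> | /eqP-> | zx0 | zy0].
- by rewrite adjC x0y0.
- by rewrite x0y0 orbT.
- by rewrite [adjacent G x0 z]adjC zx0 orbT.
- by rewrite adjC zy0.
Qed.

Lemma neighbourhoods_disjoint z : adjacent G y0 z -> ~~ adjacent G x0 z.
Proof. exact: tfG x0y0. Qed.

Lemma adjacent_across a b : adjacent G y0 a -> adjacent G x0 b -> adjacent G a b.
Proof.
move=> y0a x0b; have ay0 : adjacent G a y0 by rewrite adjC.
have bN : b \in nonisolated G by apply: (nonisolated_adjacent wfG (y := x0)); rewrite adjC.
case/or4P: (domG ay0 bN) => [/eqP ba | /eqP-> // | ba | by0].
- by move: (neighbourhoods_disjoint y0a); rewrite -ba x0b.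
- by rewrite adjC.
- by rewrite adjC in by0; move: (neighbourhoods_disjoint by0); rewrite x0b.
Qed.

Lemma adjacent_sides p q : adjacent G p q ->
  (adjacent G y0 p && adjacent G x0 q) || (adjacent G x0 p && adjacent G y0 q).
Proof.
move=> pq; have qp : adjacent G q p by rewrite adjC.
have pN := nonisolated_adjacent wfG pq; have qN := nonisolated_adjacent wfG qp.
case/orP: (neighbourhoods_cover pN) => [y0p | x0p];
  case/orP: (neighbourhoods_cover qN) => [y0q | x0q]; rewrite ?y0p ?x0q ?x0p ?y0q ?orbT //.
- by move: (tfG (etrans (adjC _ _ _) y0p) y0q); rewrite pq.
- by move: (tfG (etrans (adjC _ _ _) x0p) x0q); rewrite pq.
Qed.

Lemma complete_bipartite_of_dominating_edges : complete_bipartite_mod_isolated G.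
Proof.
have sideE c a : (a \in [set b | adjacent G c b]) = adjacent G c a by rewrite inE.
exists [set a | adjacent G y0 a], [set b | adjacent G x0 b]; split.
- rewrite disjoints_subset; apply/subsetP => a.
  by rewrite sideE inE sideE; exact: neighbourhoods_disjoint.
- apply/setP => z; rewrite in_setU !sideE; apply/idP/idP; last exact: neighbourhoods_cover.
  by case/orP=> zN; apply: (nonisolated_adjacent wfG (y := _)); rewrite adjC; exact: zN.
- apply/setP => e; apply/idP/imset2P => [eE | [a b]]; last first.
    by rewrite !inE => y0a x0b ->; exact: adjacent_across.
  have [p [q [-> pq]]] := wf_edge_pair wfG eE.
  case/orP: (adjacent_sides pq) => /andP[hp hq]; first by exists p q; rewrite ?inE.
  by exists q p; rewrite ?inE // setUC.
Qed.

End DominatingEdges.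

End TriangleProjections.

Theorem lemma1p13 (T : finType) (H : sgraph T) :
  wf_graph H -> ~ trivial_pattern H ->
  exists H' : sgraph T, projection H H' /\ is_triangle H'.
Proof.
move=> wfH nontrivial.
have edges3 : 2 < #|edges H| by rewrite ltnNge; apply/negP => le2; apply: nontrivial; right.
apply: NNPP => noK3; apply: nontrivial; left.
have /set0Pn[e eH] : edges H != set0 by rewrite -card_gt0 (ltn_trans _ edges3).
have [x0 [y0 [_ x0y0]]] := wf_edge_pair wfH eH.
apply: (complete_bipartite_of_dominating_edges wfH x0y0).
- move=> a b c ab bc; apply/negP => ac; apply: noK3.
  exact: triangle_K3 wfH ab bc ac.
- move=> x y z xy zN; apply/negPn/negP; rewrite !negb_or => /and4P[zx zy nzx nzy].
  exact: noK3 (undominated_vertex_K3 wfH edges3 xy zN zx zy nzx nzy).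
Qed.
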